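(* Let $H$ be a real Hilbert space, $A:H\to c_0$ bounded linear with adjoint $A^*:\ell^1\to H$ (identifying $c_0^*=\ell^1$), let $H_n\subset H$ be a subspace of dimension $n$ with $\mathcal N(A)\cap H_n=\{0\}$. For $i=1,2$ let $f^i\in H$ and let $u^{n,i}$ be a solution of $$\min_{u\in\ell^1}\|u\|_1\quad\text{subject to}\quad \langle z,A^*u\rangle=\langle z,f^i\rangle\ \ \forall z\in H_n,$$ and let $v^{n,i}\in H_n$ be such that $Av^{n,i}\in\partial\|\cdot\|_1(u^{n,i})$ (such elements exist). Then $$D^{\mathrm{sym}}(u^{n,1},u^{n,2}):=\langle Av^{n,1}-Av^{n,2},\,u^{n,1}-u^{n,2}\rangle\le 2\kappa_n\|f^1-f^2\|$$ and $$\big|\|u^{n,1}\|_1-\|u^{n,2}\|_1\big|\le 2\kappa_n\|f^1-f^2\|.$$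
   Context: $A^*$ is defined by $\langle A^*u,z\rangle=\sum_iu_i(Az)_i$. $\partial\|\cdot\|_1(u)=\{\xi\in\ell^\infty:\|\xi\|_\infty\le1,\ \sum_i\xi_iu_i=\|u\|_1\}$. $\kappa_n=\sup_{z\in H_n\setminus\{0\}}\|z\|/\|Az\|_\infty$. The symmetric Bregman distance is $D^{\mathrm{sym}}(v,u)=\langle\xi_v-\xi_u,v-u\rangle$ for subgradients $\xi_v\in\partial\|\cdot\|_1(v)$, $\xi_u\in\partial\|\cdot\|_1(u)$. *)

From HB Require Import structures.
From mathcomp Require Import all_boot all_order all_algebra.
From mathcomp Require Import all_classical all_reals all_analysis.
Import numFieldNormedType.Exports.
Import Order.TTheory GRing.Theory Num.Theory.
Local Open Scope ring_scope.
Local Open Scope classical_set_scope.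

Section Defs.
Context {R : realType} {V : lmodType R}.

Definition inner_product (ip : V -> V -> R) : Prop :=
  (forall x y, ip x y = ip y x) /\
  (forall (a : R) x y z, ip (a *: x + y) z = a * ip x z + ip y z) /\
  (forall x, 0 <= ip x x) /\
  (forall x, ip x x = 0 -> x = 0).

Definition ipnorm (ip : V -> V -> R) (x : V) : R := Num.sqrt (ip x x).

Definition ip_complete (ip : V -> V -> R) : Prop :=
  forall u : nat -> V,
    (forall e : R, 0 < e -> exists N, forall m k, (N <= m)%N -> (N <= k)%N ->
       ipnorm ip (u m - u k) < e) ->
    exists l : V, forall e : R, 0 < e -> exists N, forall k, (N <= k)%N ->
       ipnorm ip (u k - l) < e.

Definition is_c0 (a : nat -> R) : Prop := a @ \oo --> 0%R.

Definition supnorm (a : nat -> R) : R := sup [set `|a k| | k in [set: nat]].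

Definition bounded_linear_c0 (ip : V -> V -> R) (A : V -> nat -> R) : Prop :=
  (forall x, is_c0 (A x)) /\
  (forall (a : R) x y k, A (a *: x + y) k = a * A x k + A y k) /\
  (exists C : R, forall x k, `|A x k| <= C * ipnorm ip x).

Definition in_l1 (u : nat -> R) : Prop := cvgn (series (fun k => `|u k|)).
Definition l1norm (u : nat -> R) : R := limn (series (fun k => `|u k|)).

Definition pair_seq (xi u : nat -> R) : R := limn (series (fun k => xi k * u k)).

Definition subdiff_l1 (u xi : nat -> R) : Prop :=
  (forall k, `|xi k| <= 1) /\ pair_seq xi u = l1norm u.

(* H_n = span of a family b : 'I_n -> V *)
Definition in_span {n : nat} (b : 'I_n -> V) (z : V) : Prop :=
  exists c : 'I_n -> R, z = \sum_(i < n) c i *: b i.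

Definition lin_indep {n : nat} (b : 'I_n -> V) : Prop :=
  forall c : 'I_n -> R, \sum_(i < n) c i *: b i = 0 -> forall i, c i = 0.

Definition kernel_trivial_on {n : nat} (A : V -> nat -> R) (b : 'I_n -> V) : Prop :=
  forall z, in_span b z -> (forall k, A z k = 0) -> z = 0.

Definition kappa {n : nat} (ip : V -> V -> R) (A : V -> nat -> R) (b : 'I_n -> V) : R :=
  sup [set ipnorm ip z / supnorm (A z) | z in [set z | in_span b z /\ z <> 0]].

(* constraint <z, A^* u> = <z, f> for all z in H_n, with A^* unfolded by its
   defining identity <A^* u, z> = sum_i u_i (A z)_i *)
Definition constraint {n : nat} (ip : V -> V -> R) (A : V -> nat -> R)
  (b : 'I_n -> V) (f : V) (u : nat -> R) : Prop :=
  forall z, in_span b z -> pair_seq (A z) u = ip z f.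

Definition is_min_sol {n : nat} (ip : V -> V -> R) (A : V -> nat -> R)
  (b : 'I_n -> V) (f : V) (u : nat -> R) : Prop :=
  in_l1 u /\ constraint ip A b f u /\
  forall w, in_l1 w -> constraint ip A b f w -> l1norm u <= l1norm w.

End Defs.

From HB Require Import structures.
From mathcomp Require Import all_boot all_order all_algebra.
From mathcomp Require Import all_classical all_reals all_analysis.
From mathcomp Require Import ring lra.
Import numFieldNormedType.Exports.
Import Order.TTheory GRing.Theory Num.Theory.
Local Open Scope ring_scope.
Local Open Scope classical_set_scope.

(* If [A v] lies in the subdifferential at [u], then [||u||_1 = <A v, u> = <v, f>]
   by the constraint, while for any other feasible [u'] we only get
   [<v, f'> = <A v, u'> <= ||u'||_1].  Hence both the symmetric Bregman
   distance and the gap of the [l^1] norms are controlled by [<w, f1 - f2>]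
   for some [w] in [H_n] with [||A w||_oo <= 2], and Cauchy-Schwarz together
   with [||w|| <= kappa_n ||A w||_oo] concludes.  The constant [kappa_n] is
   finite because [H_n] is finite dimensional and [A] is injective on it:
   finitely many coordinates of [A] already determine the elements of [H_n]. *)

Section InnerProduct.
Context {R : realType} {V : lmodType R} (ip : V -> V -> R).
Hypothesis ip_inner : inner_product ip.

Lemma ipC x y : ip x y = ip y x.
Proof. by case: ip_inner => H _; apply: H. Qed.

Lemma ipDZl a x y z : ip (a *: x + y) z = a * ip x z + ip y z.
Proof. by case: ip_inner => _ [H _]; apply: H. Qed.

Lemma ip_ge0 x : 0 <= ip x x.
Proof. by case: ip_inner => _ [_ [H _]]; apply: H. Qed.

Lemma ip_eq0 x : ip x x = 0 -> x = 0.
Proof. by case: ip_inner => _ [_ [_ H]]; apply: H. Qed.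

Lemma ip0l z : ip 0 z = 0.
Proof. by have := ipDZl 1 0 0 z; rewrite scale1r addr0 mul1r; lra. Qed.

Lemma ipDl x y z : ip (x + y) z = ip x z + ip y z.
Proof. by rewrite -[x]scale1r ipDZl mul1r scale1r. Qed.

Lemma ipZl a x z : ip (a *: x) z = a * ip x z.
Proof. by rewrite -[a *: x]addr0 ipDZl ip0l addr0. Qed.

Lemma ipBl x y z : ip (x - y) z = ip x z - ip y z.
Proof. by rewrite -scaleN1r addrC ipDZl mulN1r addrC. Qed.

Lemma ipBr x y z : ip z (x - y) = ip z x - ip z y.
Proof. by rewrite ipC ipBl ipC [ip y z]ipC. Qed.

Lemma ip_suml (I : finType) (c : I -> R) (f : I -> V) z :
  ip (\sum_i c i *: f i) z = \sum_i c i * ip (f i) z.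
Proof.
apply: (big_ind2 (fun x r => ip x z = r)); first exact: ip0l.
  by move=> x1 r1 x2 r2 <- <-; rewrite ipDl.
by move=> i _; rewrite ipZl.
Qed.

Lemma ipnorm_ge0 x : 0 <= ipnorm ip x.
Proof. exact: sqrtr_ge0. Qed.

Lemma ipnorm0 : ipnorm ip 0 = 0.
Proof. by rewrite /ipnorm ip0l sqrtr0. Qed.

Lemma ipnorm_distC x y : ipnorm ip (x - y) = ipnorm ip (y - x).
Proof. by rewrite /ipnorm !ipBl !ipBr [ip y x]ipC; congr Num.sqrt; ring. Qed.

Lemma ip_sqr_le x y : ip x y ^+ 2 <= ip x x * ip y y.
Proof.
have [x0|xx_neq0] := eqVneq (ip x x) 0.
  by rewrite (ip_eq0 _ x0) !ip0l expr0n mul0r.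
have xx_gt0 : 0 < ip x x by rewrite lt_neqAle eq_sym xx_neq0 ip_ge0.
(* expand [0 <= ||t x + y||^2] at the minimising [t = - <x, y> / <x, x>] *)
have := ip_ge0 ((- (ip x y / ip x x)) *: x + y).
rewrite ipDZl !(ipC _ (_ *: x + y)) !ipDZl [ip y x]ipC => h.
have := mulr_ge0 (ltW xx_gt0) h.
suff -> : ip x x * (- (ip x y / ip x x) * (- (ip x y / ip x x) * ip x x + ip x y)
    + (- (ip x y / ip x x) * ip x y + ip y y)) = ip x x * ip y y - ip x y ^+ 2.
  by rewrite subr_ge0.
by field; rewrite gt_eqF.
Qed.

Lemma cauchy_schwarz x y : ip x y <= ipnorm ip x * ipnorm ip y.
Proof.
rewrite /ipnorm -sqrtrM ?ip_ge0 //.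
have [xy_le0|xy_gt0] := leP (ip x y) 0; first exact: le_trans xy_le0 (sqrtr_ge0 _).
rewrite -(ger0_norm (ltW xy_gt0)) -sqrtr_sqr ler_sqrt ?ip_sqr_le //.
by rewrite mulr_ge0 ?ip_ge0.
Qed.

Lemma ipnorm_sum_le n (b : 'I_n -> V) : exists G, 0 <= G /\
  forall (c : 'I_n -> R) t, 0 <= t -> (forall i, `|c i| <= t) ->
  ipnorm ip (\sum_i c i *: b i) <= t * G.
Proof.
pose G := \sum_i \sum_j `|ip (b j) (b i)|.
have G_ge0 : 0 <= G by rewrite sumr_ge0 // => i _; rewrite sumr_ge0.
exists (Num.sqrt G); split=> [|c t t_ge0 c_le]; first exact: sqrtr_ge0.
set z := \sum_i c i *: b i.
have zzE : ip z z = \sum_i \sum_j c i * c j * ip (b j) (b i).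
  rewrite /z ip_suml; apply: eq_bigr => i _.
  by rewrite ipC ip_suml mulr_sumr; apply: eq_bigr => j _; rewrite mulrA.
have zz_le : ip z z <= t ^+ 2 * G.
  rewrite zzE; apply: le_trans (ler_norm _) _.
  apply: le_trans (ler_norm_sum _ _ _) _.
  rewrite /G mulr_sumr; apply: ler_sum => i _.
  apply: le_trans (ler_norm_sum _ _ _) _.
  rewrite mulr_sumr; apply: ler_sum => j _.
  by rewrite !normrM expr2 ler_wpM2r // ler_pM.
apply: le_trans (_ : Num.sqrt (t ^+ 2 * G) <= _); first by rewrite ler_sqrt // mulr_ge0 ?sqr_ge0.
by rewrite sqrtrM ?sqr_ge0 // sqrtr_sqr ger0_norm.
Qed.

End InnerProduct.

Section LinearCoordinates.
Context {R : realType} {V : lmodType R} (A : V -> nat -> R).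
Hypothesis A_linear : forall (a : R) x y k, A (a *: x + y) k = a * A x k + A y k.

Lemma A0 k : A 0 k = 0.
Proof. by have := A_linear 1 0 0 k; rewrite scale1r addr0 mul1r; lra. Qed.

Lemma AD x y k : A (x + y) k = A x k + A y k.
Proof. by rewrite -[x]scale1r A_linear mul1r scale1r. Qed.

Lemma AZ a x k : A (a *: x) k = a * A x k.
Proof. by rewrite -[a *: x]addr0 A_linear A0 addr0. Qed.

Lemma AB x y k : A (x - y) k = A x k - A y k.
Proof. by rewrite -scaleN1r addrC A_linear mulN1r addrC. Qed.

Lemma A_sum (I : finType) (c : I -> R) (f : I -> V) k :
  A (\sum_i c i *: f i) k = \sum_i c i * A (f i) k.
Proof.
apply: (big_ind2 (fun x r => A x k = r)); first exact: A0.
  by move=> x1 r1 x2 r2 <- <-; rewrite AD.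
by move=> i _; rewrite AZ.
Qed.

Variables (n : nat) (b : 'I_n -> V).

Lemma in_spanB x y : in_span b x -> in_span b y -> in_span b (x - y).
Proof.
move=> [c ->] [d ->]; exists (fun i => c i - d i).
by rewrite -sumrB; apply: eq_bigr => i _; rewrite scalerBl.
Qed.

Definition coordmx m : 'M[R]_(m, n) := \matrix_(k < m, i < n) A (b i) k.
Definition coordrow k : 'rV[R]_n := \row_(i < n) A (b i) k.

Lemma coordmx_sub m m' : (m <= m')%N -> (coordmx m <= coordmx m')%MS.
Proof.
move=> le_mm'; apply/row_subP => i.
have -> : row i (coordmx m) = row (widen_ord le_mm' i) (coordmx m').
  by apply/rowP => j; rewrite !mxE.
exact: row_sub.
Qed.

Lemma coordrowE k m (lt_km : (k < m)%N) : coordrow k = row (Ordinal lt_km) (coordmx m).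
Proof. by apply/rowP => j; rewrite !mxE. Qed.

(* The row spaces of [coordmx m] increase with [m]; take one of maximal rank. *)
Lemma coordmx_stable : exists m, forall k, (coordrow k <= coordmx m)%MS.
Proof.
pose P (r : nat) := `[< exists m, \rank (coordmx m) = r >].
have exP : exists r, P r by exists (\rank (coordmx 0)); apply/asboolP; exists 0%N.
have ubP r : P r -> (r <= n)%N by move=> /asboolP[m <-]; exact: rank_leq_col.
case: (ex_maxnP exP ubP) => r /asboolP[m rk_m] rk_max.
exists m => k; set m' := maxn m k.+1.
have lt_km' : (k < m')%N by rewrite leq_max leqnn orbT.
have sub_mm' : (coordmx m <= coordmx m')%MS by apply: coordmx_sub; rewrite leq_max leqnn.
have sub_m'm : (coordmx m' <= coordmx m)%MS.
  move: (mxrank_leqif_sup sub_mm') => /leqifP; case: ifP => // _ /= lt_rk.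
  have : P (\rank (coordmx m')) by apply/asboolP; exists m'.
  by move=> /rk_max; rewrite leqNgt -rk_m lt_rk.
by rewrite (coordrowE _ _ lt_km'); exact: submx_trans (row_sub _ _) sub_m'm.
Qed.

Hypothesis b_indep : lin_indep b.
Hypothesis A_inj : kernel_trivial_on A b.

Lemma coordmx_row_full m : (forall k, (coordrow k <= coordmx m)%MS) ->
  row_full (coordmx m).
Proof.
move=> rows_sub; rewrite -sub1mx submxE mul1mx.
apply/eqP/matrixP => i j; rewrite [RHS]mxE.
apply: (b_indep (fun l => cokermx (coordmx m) l j)).
apply: A_inj => [|k]; first by eexists.
have /submxP[D rowk] := rows_sub k.
have : (coordrow k *m cokermx (coordmx m)) 0 j = 0.
  by rewrite rowk -mulmxA mulmx_coker mulmx0 mxE.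
rewrite mxE A_sum => h; apply: etrans _ h; apply: eq_bigr => l _.
by rewrite [coordrow _ _ _]mxE mulrC.
Qed.

Lemma coordmx_left_inv : exists m (B : 'M[R]_(n, m)), B *m coordmx m = 1%:M.
Proof.
have [m rows_sub] := coordmx_stable.
by case/row_fullP: (coordmx_row_full _ rows_sub) => B HB; exists m, B.
Qed.

Lemma span_coef_bound : exists L, 0 <= L /\ forall (c : 'I_n -> R) s,
  (forall k, `|A (\sum_i c i *: b i) k| <= s) -> forall i, `|c i| <= L * s.
Proof.
have [m [B BM1]] := coordmx_left_inv.
pose L := \sum_i \sum_(k < m) `|B i k|.
have L_ge0 : 0 <= L by rewrite sumr_ge0 // => i _; rewrite sumr_ge0.
exists L; split=> // c s Az_le i.
have s_ge0 : 0 <= s := le_trans (normr_ge0 _) (Az_le 0%N).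
(* [c = B (coordmx m c)] and the entries of [coordmx m c] are coordinates of [A z] *)
have ciE : c i = \sum_(k < m) B i k * A (\sum_l c l *: b l) k.
  have : (\col_l c l) i 0 = (B *m (coordmx m *m \col_l c l)) i 0.
    by rewrite mulmxA BM1 mul1mx.
  rewrite mxE => ->; rewrite mxE; apply: eq_bigr => k _.
  rewrite mxE A_sum; congr (_ * _); apply: eq_bigr => l _.
  by rewrite !mxE mulrC.
rewrite ciE; apply: le_trans (ler_norm_sum _ _ _) _.
apply: (@le_trans _ _ (\sum_(k < m) `|B i k| * s)).
  by apply: ler_sum => k _; rewrite normrM ler_wpM2l.
rewrite -mulr_suml ler_wpM2r // /L (bigD1 i) //= lerDl.
by rewrite sumr_ge0 // => l _; rewrite sumr_ge0.
Qed.

Variable ip : V -> V -> R.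
Hypothesis ip_inner : inner_product ip.

Lemma span_ipnorm_bound : exists K, 0 <= K /\ forall z s,
  in_span b z -> (forall k, `|A z k| <= s) -> ipnorm ip z <= K * s.
Proof.
have [L [L_ge0 c_le]] := span_coef_bound.
have [G [G_ge0 z_le]] := ipnorm_sum_le _ ip_inner _ b.
exists (L * G); split=> [|z s [c ->] Az_le]; first exact: mulr_ge0.
have s_ge0 : 0 <= s := le_trans (normr_ge0 _) (Az_le 0%N).
rewrite mulrAC; apply: z_le; [exact: mulr_ge0 | exact: c_le].
Qed.

End LinearCoordinates.

Section Sequences.
Context {R : realType}.
Implicit Types (xi eta u w : nat -> R).

Lemma pair_seq_cvg xi u : (forall k, `|xi k| <= 1) -> in_l1 u ->
  cvgn (series (fun k => xi k * u k)).
Proof.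
move=> xi_le1 u_l1; apply: (@normed_cvg R R).
apply: (series_le_cvg _ _ _ u_l1) => k //=.
by rewrite normrM -[leRHS]mul1r ler_wpM2r.
Qed.

Lemma pair_seq_le_l1norm xi u : (forall k, `|xi k| <= 1) -> in_l1 u ->
  pair_seq xi u <= l1norm u.
Proof.
move=> xi_le1 u_l1; apply: lim_series_le => [||k]; [exact: pair_seq_cvg | exact: u_l1 |].
apply: le_trans (ler_norm _) _.
by rewrite normrM -[leRHS]mul1r ler_wpM2r.
Qed.

Lemma pair_seqBB xi eta u w :
  (forall k, `|xi k| <= 1) -> (forall k, `|eta k| <= 1) -> in_l1 u -> in_l1 w ->
  pair_seq (fun k => xi k - eta k) (fun k => u k - w k) =
  pair_seq xi u - pair_seq xi w - (pair_seq eta u - pair_seq eta w).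
Proof.
move=> xi_le1 eta_le1 u_l1 w_l1.
have cvg_xi_u := pair_seq_cvg _ _ xi_le1 u_l1; have cvg_xi_w := pair_seq_cvg _ _ xi_le1 w_l1.
have cvg_eta_u := pair_seq_cvg _ _ eta_le1 u_l1; have cvg_eta_w := pair_seq_cvg _ _ eta_le1 w_l1.
rewrite /pair_seq; have -> : (fun k => (xi k - eta k) * (u k - w k)) =
    ((fun k => xi k * u k) - (fun k => xi k * w k))
    - ((fun k => eta k * u k) - (fun k => eta k * w k)).
  by apply/funext => k; rewrite !fctE; ring.
rewrite lim_seriesB; try exact: is_cvg_seriesB.
by rewrite !lim_seriesB.
Qed.

Lemma le_supnorm (x : nat -> R) M k : (forall j, `|x j| <= M) -> `|x k| <= supnorm x.
Proof. by move=> x_le; apply: ub_le_sup; [exists M => _ [j _ <-] | exists k]. Qed.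

Lemma supnorm_le (x : nat -> R) s : (forall j, `|x j| <= s) -> supnorm x <= s.
Proof. by move=> x_le; apply: ge_sup; [exists `|x 0%N|, 0%N | move=> _ [j _ <-]]. Qed.

End Sequences.

Section Kappa.
Context {R : realType} {V : lmodType R} {ip : V -> V -> R} {A : V -> nat -> R}.
Hypothesis ip_inner : inner_product ip.
Hypothesis A_linear : forall (a : R) x y k, A (a *: x + y) k = a * A x k + A y k.
Context {C : R}.
Hypothesis A_bounded : forall x k, `|A x k| <= C * ipnorm ip x.
Context {n : nat} {b : 'I_n -> V}.
Hypotheses (b_indep : lin_indep b) (A_inj : kernel_trivial_on A b).

Lemma supnormA_gt0 z : in_span b z -> z <> 0 -> 0 < supnorm (A z).
Proof.
move=> z_span z_neq0; have [k Azk_neq0] : exists k, A z k != 0.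
  apply/not_existsP => Az0; apply: z_neq0; apply: (A_inj _ z_span) => k.
  by apply/eqP/negPn/negP; apply: Az0.
apply: lt_le_trans (le_supnorm _ _ k (A_bounded z)); by rewrite normr_gt0.
Qed.

Let kappa_set :=
  [set ipnorm ip z / supnorm (A z) | z in [set z | in_span b z /\ z <> 0]].

Lemma kappa_set_ubound : has_ubound kappa_set.
Proof.
have [K [_ z_le]] := span_ipnorm_bound _ A_linear _ _ b_indep A_inj _ ip_inner.
exists K => _ [z [z_span z_neq0] <-].
rewrite ler_pdivrMr ?supnormA_gt0 //; apply: z_le => // k.
exact: le_supnorm _ _ k (A_bounded z).
Qed.

Lemma kappa_ge0 : 0 <= kappa ip A b.
Proof.
rewrite /kappa -/kappa_set.
case: (pselect (kappa_set !=set0)) => [[_ [z [z_span z_neq0] _]]|kappa_set0].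
  have z_in : kappa_set (ipnorm ip z / supnorm (A z)) by exists z.
  apply: le_trans (ub_le_sup kappa_set_ubound z_in).
  by rewrite divr_ge0 ?ipnorm_ge0 // ltW ?supnormA_gt0.
suff -> : kappa_set = set0 by rewrite sup0.
by apply/eqP/negPn/negP => /set0P.
Qed.

Lemma ipnorm_le_kappa v s : in_span b v -> (forall k, `|A v k| <= s) ->
  ipnorm ip v <= kappa ip A b * s.
Proof.
move=> v_span Av_le; have s_ge0 : 0 <= s := le_trans (normr_ge0 _) (Av_le 0%N).
have [->|/eqP v_neq0] := eqVneq v 0; first by rewrite ipnorm0 ?mulr_ge0 ?kappa_ge0.
have : ipnorm ip v / supnorm (A v) <= kappa ip A b.
  by apply: (ub_le_sup kappa_set_ubound); exists v.
rewrite ler_pdivrMr ?supnormA_gt0 // => /le_trans; apply.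
by rewrite ler_wpM2l ?kappa_ge0 ?supnorm_le.
Qed.

Lemma ip_le_kappa v g s : in_span b v -> (forall k, `|A v k| <= s) ->
  ip v g <= kappa ip A b * s * ipnorm ip g.
Proof.
move=> v_span Av_le; apply: le_trans (cauchy_schwarz _ ip_inner v g) _.
by rewrite ler_wpM2r ?ipnorm_ge0 ?ipnorm_le_kappa.
Qed.

End Kappa.

Section FeasiblePoints.
Context {R : realType} {V : lmodType R} {ip : V -> V -> R} {A : V -> nat -> R}.
Hypothesis ip_inner : inner_product ip.
Context {n : nat} {b : 'I_n -> V}.

Lemma l1norm_sub_le {u u' v f f'} :
  in_span b v -> subdiff_l1 u (A v) -> constraint ip A b f u ->
  in_l1 u' -> constraint ip A b f' u' ->
  l1norm u - l1norm u' <= ip v (f - f').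
Proof.
move=> v_span [Av_le1 u_norm] u_feas u'_l1 u'_feas.
have := pair_seq_le_l1norm _ _ Av_le1 u'_l1.
by rewrite -u_norm u_feas // u'_feas // (ipBr _ ip_inner); lra.
Qed.

Lemma bregman_symE {u u' v v' f f'} :
  in_span b v -> in_span b v' -> subdiff_l1 u (A v) -> subdiff_l1 u' (A v') ->
  in_l1 u -> in_l1 u' -> constraint ip A b f u -> constraint ip A b f' u' ->
  pair_seq (fun k => A v k - A v' k) (fun k => u k - u' k) = ip (v - v') (f - f').
Proof.
move=> v_span v'_span [Av_le1 _] [Av'_le1 _] u_l1 u'_l1 u_feas u'_feas.
rewrite pair_seqBB // !u_feas // !u'_feas //.
by rewrite (ipBl _ ip_inner) !(ipBr _ ip_inner); ring.
Qed.

End FeasiblePoints.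

Theorem proposition3 (R : realType) (V : lmodType R) (ip : V -> V -> R)
  (A : V -> nat -> R) (n : nat) (b : 'I_n -> V)
  (f1 f2 : V) (u1 u2 : nat -> R) (v1 v2 : V) :
  inner_product ip -> ip_complete ip ->
  bounded_linear_c0 ip A ->
  lin_indep b -> kernel_trivial_on A b ->
  is_min_sol ip A b f1 u1 -> is_min_sol ip A b f2 u2 ->
  in_span b v1 -> in_span b v2 ->
  subdiff_l1 u1 (A v1) -> subdiff_l1 u2 (A v2) ->
  pair_seq (fun k => A v1 k - A v2 k) (fun k => u1 k - u2 k)
    <= 2 * kappa ip A b * ipnorm ip (f1 - f2)
  /\ `|l1norm u1 - l1norm u2| <= 2 * kappa ip A b * ipnorm ip (f1 - f2).
Proof.
move=> ip_inner _ [_ [A_linear [C A_bounded]]] b_indep A_inj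
  [u1_l1 [u1_feas _]] [u2_l1 [u2_feas _]] v1_span v2_span v1_sub v2_sub.
have ip_le := ip_le_kappa ip_inner A_linear A_bounded b_indep A_inj.
have kappa_nonneg := kappa_ge0 ip_inner A_linear A_bounded b_indep A_inj.
have norm_ge0 := ipnorm_ge0 ip (f1 - f2).
have [Av1_le1 _] := v1_sub; have [Av2_le1 _] := v2_sub.
split.
  rewrite (bregman_symE ip_inner v1_span v2_span v1_sub v2_sub u1_l1 u2_l1 u1_feas u2_feas).
  rewrite [2 * _]mulrC; apply: ip_le => [|k]; first exact: in_spanB.
  rewrite (AB _ A_linear); apply: le_trans (ler_normB _ _) _.
  by have := Av1_le1 k; have := Av2_le1 k; lra.
have gap12 := l1norm_sub_le ip_inner v1_span v1_sub u1_feas u2_l1 u2_feas.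
have gap21 := l1norm_sub_le ip_inner v2_span v2_sub u2_feas u1_l1 u1_feas.
have := ip_le _ (f1 - f2) _ v1_span Av1_le1.
have := ip_le _ (f2 - f1) _ v2_span Av2_le1.
rewrite (ipnorm_distC _ ip_inner) !mulr1 -mulrA ler_norml.
have := mulr_ge0 kappa_nonneg norm_ge0.
move: (kappa ip A b * ipnorm ip (f1 - f2)) => kf; lra.
Qed.
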